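(* Let $\Omega$ be a topological space, $X$ a locally convex topological vector space over $\mathbb{C}$, $v \in F(\Omega, \mathbb{R}_+)$ and $f \in F(\Omega, X)$ such that $vf$ (respectively $f$) is continuous on $\mathrm{supp}\, v$. Let $A \subset C(\Omega, [0, 1])$, or let $A$ be a self-adjoint subalgebra of $C(\Omega, \mathbb{C})$ such that every $\varphi\in A$ is bounded on $\mathrm{supp}\,v$. If $A$ separates disjoint Lebesgue sets of $vf$ (respectively $f$) in $\mathrm{supp}\, v$, then $A$ $\beta$-separates disjoint Lebesgue sets of $vf$ (respectively $f$) in $\mathrm{supp}\, v$.
   Context: $vf(x)=v(x)f(x)$; $\mathrm{supp}\,v$ is the closure of $\{v\neq0\}$; $X^*$ is the space of continuous linear functionals $X\to\mathbb{C}$. For $h\in F(\Omega,X)$, $S\subset\Omega$, $e^*\in X^*$, $a<b$: $L_a=\{x\in S:\Re e^*(h(x))\le a\}$, $L^b=\{x\in S:\Re e^*(h(x))\ge b\}$. ''$A$ separates disjoint Lebesgue sets of $h$ in $S$'' means: for all $e^*\in X^*$ and $a<b$ there is $\varphi\in A$ with $\overline{\varphi(L_a)}\cap\overline{\varphi(L^b)}=\emptyset$ (with $\varphi(\emptyset)=\emptyset$). A zero-set is $h^{-1}(0)$ with $h\in C(\Omega,\mathbb{R})$; a $z$-filter is a nonempty family $\mathcal{F}$ of zero-sets with $\emptyset\notin\mathcal{F}$, closed under finite intersections and under passing to larger zero-sets. $\mathcal{F}$ is $(A,v)$-antisymmetric if every $F\in\mathcal{F}$ meets $\mathrm{supp}\,v$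 and, for each $\phi\in A$ with $\bigcap_{F\in\mathcal{F}}\overline{\phi(F\cap\mathrm{supp}\,v)}\subset[0,1]$ (closures in $\mathbb{C}\cup\{\infty\}$), this intersection is a single point. ''$A$ $\beta$-separates disjoint Lebesgue sets of $h$ in $\mathrm{supp}\,v$'' means: for any $(A,v)$-antisymmetric $z$-filter $\mathcal{F}$, any $e^*\in X^*$ and $a<b$, there is $F\in\mathcal{F}$ with $F\cap L_a=\emptyset$ or $F\cap L^b=\emptyset$, the Lebesgue sets being taken in $S=\mathrm{supp}\,v$. *)

From HB Require Import structures.
From mathcomp Require Import all_boot all_order all_algebra.
From mathcomp Require Import all_classical all_reals all_analysis.
From mathcomp.real_closed Require Import complex.
Import Order.TTheory GRing.Theory Num.Theory.
Import numFieldNormedType.Exports.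
Set Implicit Arguments. Unset Strict Implicit. Unset Printing Implicit Defensive.
Local Open Scope classical_set_scope.
Local Open Scope ring_scope.

(* The complex numbers are R[i]; R[i]^o carries the (norm = modulus) topology. *)

Section Defs.
Context {R : realType} {Omega : topologicalType}.

Definition Ccontinuous (phi : Omega -> R[i]) : Prop :=
  continuous (phi : Omega -> R[i]^o).

Definition closC (S : set R[i]) : set R[i]^o := closure (S : set R[i]^o).

Definition closCinf (S : set R[i]) : set (one_point_compactification R[i]^o) :=
  @closure (one_point_compactification R[i]^o)
    ((fun z : R[i]^o => Some z) @` S).

Definition unit_seg_inf : set (one_point_compactification R[i]^o) :=
  [set p | exists r : R, 0 <= r <= 1 /\ p = Some (r%:C%C : R[i]^o)].

Definition supp (v : Omega -> R) : set Omega := closure [set x | v x != 0].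

Definition dual_elt {X : tvsType R[i]} (e : X -> R[i]) : Prop :=
  (forall (c : R[i]) (x y : X), e (c *: x + y) = c * e x + e y) /\
  continuous (e : X -> R[i]^o).

Definition Lebesgue_le {X : tvsType R[i]} (h : Omega -> X) (S : set Omega)
  (e : X -> R[i]) (a : R) : set Omega := [set x | S x /\ complex.Re (e (h x)) <= a].
Definition Lebesgue_ge {X : tvsType R[i]} (h : Omega -> X) (S : set Omega)
  (e : X -> R[i]) (b : R) : set Omega := [set x | S x /\ b <= complex.Re (e (h x))].

Definition separates_Lebesgue {X : tvsType R[i]} (A : set (Omega -> R[i]))
  (h : Omega -> X) (S : set Omega) : Prop :=
  forall e : X -> R[i], dual_elt e -> forall a b : R, a < b ->
    exists2 phi, A phi &
      closC (phi @` Lebesgue_le h S e a) `&` closC (phi @` Lebesgue_ge h S e b)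
        = set0.

Definition zero_set (Z : set Omega) : Prop :=
  exists g : Omega -> R, continuous g /\ Z = g @^-1` [set 0].

Definition z_filter (F : set (set Omega)) : Prop :=
  [/\ (exists Z, F Z),
      (forall Z, F Z -> zero_set Z),
      ~ F set0,
      (forall Z1 Z2, F Z1 -> F Z2 -> F (Z1 `&` Z2)) &
      (forall Z1 Z2, F Z1 -> zero_set Z2 -> Z1 `<=` Z2 -> F Z2)].

Definition antisymmetric (A : set (Omega -> R[i])) (v : Omega -> R)
  (F : set (set Omega)) : Prop :=
  (forall Z, F Z -> Z `&` supp v !=set0) /\
  (forall phi, A phi ->
     \bigcap_(Z in F) closCinf (phi @` (Z `&` supp v)) `<=` unit_seg_inf ->
     exists p, \bigcap_(Z in F) closCinf (phi @` (Z `&` supp v)) = [set p]).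

Definition beta_separates_Lebesgue {X : tvsType R[i]} (A : set (Omega -> R[i]))
  (h : Omega -> X) (v : Omega -> R) : Prop :=
  forall F : set (set Omega), z_filter F -> antisymmetric A v F ->
  forall e : X -> R[i], dual_elt e -> forall a b : R, a < b ->
    exists2 Z, F Z &
      (Z `&` Lebesgue_le h (supp v) e a = set0 \/
       Z `&` Lebesgue_ge h (supp v) e b = set0).

Definition sub_C01 (A : set (Omega -> R[i])) : Prop :=
  forall phi, A phi -> Ccontinuous phi /\
    forall x, exists r : R, 0 <= r <= 1 /\ phi x = r%:C%C.

Definition selfadjoint_subalgebra (A : set (Omega -> R[i])) : Prop :=
  (forall phi, A phi -> Ccontinuous phi) /\
  [/\ A (fun _ => 0),
      (forall phi psi, A phi -> A psi -> A (fun x => phi x + psi x)),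
      (forall phi psi, A phi -> A psi -> A (fun x => phi x * psi x)),
      (forall (c : R[i]) phi, A phi -> A (fun x => c * phi x)) &
      (forall phi, A phi -> A (fun x => (phi x)^*))].

End Defs.

From Pilot Require Import Defs.
From HB Require Import structures.
From mathcomp Require Import all_boot all_order all_algebra.
From mathcomp Require Import all_classical all_reals all_analysis.
From mathcomp.real_closed Require Import complex.
From mathcomp Require Import ring lra.
Import Order.TTheory GRing.Theory Num.Theory.
Import numFieldNormedType.Exports.
Local Open Scope classical_set_scope.
Local Open Scope ring_scope.

(* If every member of the (A,v)-antisymmetric z-filter F met both L_a and L_b,
   take phi in A separating them.  As phi is bounded on supp v, F restricted to
   L_a and to L_b yields cluster values p_a, p_b of phi, lying in the closures of
   phi(L_a) and phi(L_b).  Antisymmetry forces any psi in A with values in [0,1]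
   on supp v to have a single cluster value along F on supp v; applied to the
   real and imaginary parts of phi this gives p_a = p_b, a contradiction.  In
   the algebra case Re phi and Im phi lie in A by self-adjointness, and since A
   need not contain constants they are moved into [0,1] by the polynomials
   s^2/K^2 and s^2(s+K)/(2K^3), which have no constant term and together
   determine s. *)

Lemma fst_continuous {U V : topologicalType} : continuous (@fst U V).
Proof. by move=> [? ?]; exact: cvg_fst. Qed.

Lemma snd_continuous {U V : topologicalType} : continuous (@snd U V).
Proof. by move=> [? ?]; exact: cvg_snd. Qed.

Section ClusterValue.
Context {T : Type} (F : set (set T)).

Definition cluster_value {U : topologicalType} (L : set T) (g : T -> U) (t : U) :=
  forall Z, F Z -> closure (g @` (Z `&` L)) t.

Definition cluster_agree {U : topologicalType} (La Lb : set T) (g : T -> U) :=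
  forall ta tb, cluster_value La g ta -> cluster_value Lb g tb -> ta = tb.

Lemma cluster_value_comp {U W : topologicalType} {f : U -> W} {L g t} :
  continuous f -> cluster_value L g t -> cluster_value L (f \o g) (f t).
Proof.
move=> fc gt Z FZ B /fc fB; have [_ [[x ZLx <-] Bgx]] := gt Z FZ _ fB.
by exists (f (g x)); split => //; exists x.
Qed.

Lemma cluster_value_closure {U : topologicalType} {Z L} {g : T -> U} {t} :
  F Z -> cluster_value L g t -> closure (g @` L) t.
Proof.
by move=> FZ /(_ Z FZ); apply: closureS => _ [x [_ Lx] <-]; exists x.
Qed.

Lemma cluster_value_exists {U : topologicalType} {L} {g : T -> U} {K : set U} :
  (exists Z, F Z) -> (forall Z1 Z2, F Z1 -> F Z2 -> F (Z1 `&` Z2)) ->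
  (forall Z, F Z -> Z `&` L !=set0) -> compact K -> g @` L `<=` K ->
  exists t, cluster_value L g t.
Proof.
move=> [Z0 FZ0] FI meetL cptK gLK.
pose G := filter_from F (fun Z => Z `&` L).
have G_proper : ProperFilter G.
  apply: filter_from_proper meetL; apply: filter_from_filter; first by exists Z0.
  move=> Z1 Z2 FZ1 FZ2; exists (Z1 `&` Z2); first exact: FI.
  by move=> x [[? ?] ?].
have gGK : (g @ G) K by exists Z0 => // x [_ Lx]; apply: gLK; exists x.
have [t [_ clt]] := cptK _ (fmap_proper_filter g G_proper) gGK.
exists t => Z FZ B Bt; apply: clt Bt.
by exists Z => // x ZLx; exists x.
Qed.

Lemma cluster_value_const {U : topologicalType} {L} {g : T -> U} {c t} :
  hausdorff_space U -> (exists Z, F Z) -> (forall x, g x = c) ->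
  cluster_value L g t -> t = c.
Proof.
move=> U_T2 [Z FZ] gc /(_ Z FZ) /(@closureS _ _ [set c]).
have cl_c : closed [set c] by exact/accessible_closed_set1/hausdorff_accessible.
by rewrite -(closure_id _).1 //; apply => _ [x _ <-]; rewrite gc.
Qed.

Lemma cluster_agree_comp {U W : topologicalType} {f : U -> W} {La Lb g ta tb} :
  continuous f -> cluster_agree La Lb (f \o g) ->
  cluster_value La g ta -> cluster_value Lb g tb -> f ta = f tb.
Proof. by move=> fc fg_agree gta gtb; apply: fg_agree; apply: cluster_value_comp. Qed.

Lemma cluster_agree_pair {U V : topologicalType} {La Lb} {g1 : T -> U} {g2 : T -> V} :
  cluster_agree La Lb g1 -> cluster_agree La Lb g2 ->
  cluster_agree La Lb (fun x => (g1 x, g2 x)).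
Proof.
move=> agree1 agree2 [ta1 ta2] [tb1 tb2] ta tb.
pose g x := (g1 x, g2 x).
congr pair.
  exact: (cluster_agree_comp (g := g) fst_continuous agree1 ta tb).
exact: (cluster_agree_comp (g := g) snd_continuous agree2 ta tb).
Qed.

End ClusterValue.

Lemma one_point_closure_sub {T : topologicalType} {K S : set T} :
  compact K -> closed K -> S `<=` K ->
  closure (Some @` S : set (one_point_compactification T)) `<=` Some @` K.
Proof.
move=> cptK clK SK [z|] clz.
  suff : closure S z by move/(closureS SK); rewrite -(closure_id _).1 //; exists z.
  move=> B Bz; have [_ [[s Ss <-] [b Bb [bs]]]] :=
    clz _ (one_point_compactification_some_nbhs _ _ Bz).
  by exists s; split => //; rewrite -bs.
have nbhs_none : @nbhs _ (one_point_compactification T) None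
    (Some @` (~` K) `|` [set None]) by exists K.
have [_ [[s Ss <-] [[b nKb [bs]]|//]]] := clz _ nbhs_none.
by case: nKb; rewrite bs; exact: SK.
Qed.

Section ComplexTopology.
Context {R : realType}.

Lemma normc_real (r : R) : `|r%:C%C| = `|r|%:C%C.
Proof. by rewrite normc_def /= expr0n addr0 sqrtr_sqr. Qed.

Lemma real_complex_continuous : continuous (fun r : R => r%:C%C : R[i]^o).
Proof.
move=> x; apply/cvgrPdist_lt => e; rewrite ltcE /= => /andP[/eqP Im_e Re_e_gt0].
near=> y.
have : `|x - y| < complex.Re e by near: y; apply: cvgr_dist_lt.
by rewrite -rmorphB normc_real ltcE /= Im_e eqxx => ->.
Unshelve. all: by end_near.
Qed.

Definition pair_complex (p : R * R) : R[i]^o := (p.1%:C + 'i * p.2%:C)%C.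

Definition reim (z : R[i]) : R * R := (complex.Re z, complex.Im z).

Lemma reimK : cancel reim pair_complex.
Proof. by move=> z; rewrite /pair_complex /= -complexE. Qed.

Lemma pair_complex_continuous : continuous pair_complex.
Proof.
move=> p; apply: cvgD.
  apply: (continuous_comp (@fst_continuous R R p)); exact: real_complex_continuous.
apply: cvgM; first exact: cvg_cst.
apply: (continuous_comp (@snd_continuous R R p)); exact: real_complex_continuous.
Qed.

Lemma normc_Re_Im_le {M : R} {z : R[i]} :
  `|z| <= M%:C%C -> `|complex.Re z| <= M /\ `|complex.Im z| <= M.
Proof.
rewrite normc_def lecR => zM.
by split; apply: le_trans zM; rewrite -sqrtr_sqr ler_wsqrtr // ?lerDl ?lerDr sqr_ge0.
Qed.

Definition unit_segment : set R[i]^o := (fun r : R => r%:C%C : R[i]^o) @` `[0, 1].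

Lemma unit_segment_compact : compact unit_segment.
Proof.
apply: continuous_compact; last exact: segment_compact.
exact/continuous_subspaceT/real_complex_continuous.
Qed.

Lemma closCinf_unit_segment (S : set R[i]) :
  S `<=` unit_segment -> closCinf S `<=` unit_seg_inf.
Proof.
have closed01 := compact_closed (@norm_hausdorff _ _) unit_segment_compact.
move=> S01 p /(one_point_closure_sub unit_segment_compact closed01 S01).
by move=> [_ [r r01 <-] <-]; exists r; split => //; move: r01; rewrite /= in_itv.
Qed.

Lemma cluster_value_reim {T : Type} {F : set (set T)} {L} {phi : T -> R[i]^o} {t} :
  cluster_value F L (reim \o phi) t -> cluster_value F L phi (pair_complex t).
Proof.
move=> /(cluster_value_comp _ pair_complex_continuous).
by rewrite (_ : pair_complex \o _ = phi) //; apply: funext => x /=; rewrite reimK.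
Qed.

Lemma bounded_reim_cluster_value {T : Type} {F : set (set T)} {L}
    {phi : T -> R[i]} {M : R} :
  (exists Z, F Z) -> (forall Z1 Z2, F Z1 -> F Z2 -> F (Z1 `&` Z2)) ->
  (forall Z, F Z -> Z `&` L !=set0) -> (forall x, L x -> `|phi x| <= M%:C%C) ->
  exists t, cluster_value F L (reim \o phi) t.
Proof.
move=> F_nonempty FI meetL phiM.
apply: (cluster_value_exists F F_nonempty FI meetL (K := `[- M, M] `*` `[- M, M])).
  by apply: compact_setX; exact: segment_compact.
move=> _ [x Lx <-]; have [ReM ImM] := normc_Re_Im_le (phiM x Lx).
by split; rewrite /= in_itv /= -ler_norml.
Qed.

End ComplexTopology.

Lemma sqr_cube_inj {R : idomainType} {x y : R} :
  x ^+ 2 = y ^+ 2 -> x ^+ 3 = y ^+ 3 -> x = y.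
Proof.
move=> xy2; have [x0 | x_neq0] := eqVneq x 0.
  by move: xy2; rewrite x0 exprS mul0r => /esym/eqP; rewrite expf_eq0 /= => /eqP ->.
rewrite [x ^+ 3]exprS [y ^+ 3]exprS -xy2; apply: mulIf.
by rewrite expf_neq0.
Qed.

Lemma cubic_unit_bounds {R : realFieldType} {K s : R} : 0 < K -> `|s| <= K ->
  0 <= K ^- 2 * s ^+ 2 <= 1 /\
  0 <= (2 * K ^+ 3)^-1 * s ^+ 3 + (2 * K ^+ 2)^-1 * s ^+ 2 <= 1.
Proof.
rewrite ler_norml => K_gt0 /andP[Ks sK].
have sqr_le : s ^+ 2 <= K ^+ 2 by nra.
have cubic_le : s ^+ 2 * (s + K) <= 2 * K ^+ 3 by nra.
have -> : (2 * K ^+ 3)^-1 * s ^+ 3 + (2 * K ^+ 2)^-1 * s ^+ 2 =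
          s ^+ 2 * (s + K) / (2 * K ^+ 3) by field; rewrite gt_eqF.
rewrite mulrC !ler_pdivrMr ?mulr_gt0 ?exprn_gt0 // !mul1r sqr_le cubic_le.
by split; rewrite andbT; apply: divr_ge0; nra.
Qed.

Lemma sub_C01_norm_le1 {R : realType} {Omega : topologicalType}
    {A : set (Omega -> R[i])} {phi : Omega -> R[i]} :
  sub_C01 A -> A phi -> forall x, `|phi x| <= 1%:C%C.
Proof.
move=> A01 Aphi x; have [r [/andP[r_ge0 r_le1] ->]] := (A01 phi Aphi).2 x.
by rewrite normc_real lecR ger0_norm.
Qed.

Section AntisymmetricFilter.
Context {R : realType} {Omega : topologicalType}.
Context {A : set (Omega -> R[i])} {v : Omega -> R} {F : set (set Omega)}.
Context {La Lb : set Omega}.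
Hypotheses (F_anti : Defs.antisymmetric A v F) (F_nonempty : exists Z, F Z).
Hypotheses (La_supp : La `<=` supp v) (Lb_supp : Lb `<=` supp v).

Lemma antisymmetric_cluster_agree {psi : Omega -> R[i]} {k : Omega -> R} :
  A psi -> (forall x, supp v x -> psi x = (k x)%:C%C /\ 0 <= k x <= 1) ->
  cluster_agree F La Lb k.
Proof.
move=> Apsi psiE ta tb kta ktb.
pose I := \bigcap_(Z in F) closCinf (psi @` (Z `&` supp v)).
pose embed (t : R) : one_point_compactification R[i]^o := Some (t%:C%C : R[i]^o).
have embed_cont : continuous embed.
  move=> t; exact: (continuous_comp (real_complex_continuous t)
                     (one_point_compactification_some_continuous _)).
have I_cluster L t : L `<=` supp v -> cluster_value F L k t -> I (embed t).
  move=> Lsupp kt Z FZ; have := cluster_value_comp _ embed_cont kt Z FZ.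
  apply: closureS => _ [x [Zx Lx] <-]; exists (psi x).
    by exists x => //; split => //; exact: Lsupp.
  by rewrite /embed /= (psiE x (Lsupp x Lx)).1.
have I_unit_seg : I `<=` unit_seg_inf.
  have [Z0 FZ0] := F_nonempty.
  move=> p /(_ Z0 FZ0); apply: closCinf_unit_segment => _ [x [_ sx] <-].
  by have [-> k01] := psiE x sx; exists (k x) => //=; rewrite in_itv.
have [p Ip] := F_anti.2 psi Apsi I_unit_seg.
have := I_cluster _ _ La_supp kta; have := I_cluster _ _ Lb_supp ktb.
by rewrite /I Ip /embed => <- [] ->.
Qed.

Lemma sub_C01_cluster_agree {phi : Omega -> R[i]} :
  sub_C01 A -> A phi -> cluster_agree F La Lb (reim \o phi).
Proof.
move=> A01 Aphi; have phiE := (A01 phi Aphi).2.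
apply: (cluster_agree_pair F (g1 := fun x => complex.Re (phi x))
                             (g2 := fun x => complex.Im (phi x))).
  by apply: (antisymmetric_cluster_agree Aphi) => x _; have [r [r01 ->]] := phiE x.
have Im_phi0 x : complex.Im (phi x) = 0 by have [r [_ ->]] := phiE x.
move=> ta tb ta0 tb0.
by rewrite (cluster_value_const F (@Rhausdorff R) F_nonempty Im_phi0 ta0)
           (cluster_value_const F (@Rhausdorff R) F_nonempty Im_phi0 tb0).
Qed.

Section Selfadjoint.
Hypothesis A_selfadjoint : selfadjoint_subalgebra A.

Lemma selfadjoint_real_cluster_agree {r : Omega -> R[i]} {g : Omega -> R} {K : R} :
  A r -> 0 < K -> (forall x, supp v x -> r x = (g x)%:C%C /\ `|g x| <= K) ->
  cluster_agree F La Lb g.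
Proof.
have [_ [_ Aadd Amul Ascal _]] := A_selfadjoint.
move=> Ar K_gt0 rE ta tb gta gtb.
have cubic_agree c d : (forall s, `|s| <= K -> 0 <= c * s ^+ 3 + d * s ^+ 2 <= 1) ->
    c * ta ^+ 3 + d * ta ^+ 2 = c * tb ^+ 3 + d * tb ^+ 2.
  move=> cubic01; pose p s := c * s ^+ 3 + d * s ^+ 2.
  have p_cont : continuous p.
    by move=> s; apply: cvgD; apply: cvgM; apply: cvg_cst || apply: exprn_continuous.
  apply: (cluster_agree_comp _ p_cont _ gta gtb).
  apply: (antisymmetric_cluster_agree
    (psi := fun x => c%:C%C * (r x * r x * r x) + d%:C%C * (r x * r x))).
    exact: Aadd _ _ (Ascal _ _ (Amul _ _ (Amul _ _ Ar Ar) Ar)) (Ascal _ _ (Amul _ _ Ar Ar)).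
  move=> x sx; have [-> gxK] := rE x sx; split; last exact: cubic01.
  by rewrite /p rmorphD !rmorphM !mulrA.
have sqr_eq : ta ^+ 2 = tb ^+ 2.
  have K2_neq0 : K ^- 2 != 0 by rewrite invr_eq0 expf_neq0 ?gt_eqF.
  apply: (mulfI K2_neq0); move: (cubic_agree 0 (K ^- 2)); rewrite !mul0r !add0r.
  by apply=> s /(cubic_unit_bounds K_gt0) [+ _]; rewrite mul0r add0r.
apply: sqr_cube_inj => //.
have := cubic_agree _ _ (fun s sK => (cubic_unit_bounds K_gt0 sK).2).
rewrite sqr_eq => /addIr; apply: mulfI.
by rewrite invr_eq0 gt_eqF // mulr_gt0 ?exprn_gt0.
Qed.

Lemma selfadjoint_cluster_agree {phi : Omega -> R[i]} {M : R} :
  A phi -> (forall x, supp v x -> `|phi x| <= M%:C%C) ->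
  cluster_agree F La Lb (reim \o phi).
Proof.
have [_ [_ Aadd _ Ascal Aconj]] := A_selfadjoint.
move=> Aphi phiM; pose K := `|M| + 1.
have K_gt0 : 0 < K by rewrite ltr_wpDl.
have M_le : M <= K by rewrite (le_trans (ler_norm M)) // lerDl.
have Re_le x : supp v x -> `|complex.Re (phi x)| <= K.
  by move=> /phiM /normc_Re_Im_le[ReM _]; apply: le_trans M_le.
have Im_le x : supp v x -> `|complex.Im (phi x)| <= K.
  by move=> /phiM /normc_Re_Im_le[_ ImM]; apply: le_trans M_le.
apply: (cluster_agree_pair F (g1 := fun x => complex.Re (phi x))
                             (g2 := fun x => complex.Im (phi x))).
  apply: (selfadjoint_real_cluster_agree _ K_gt0).
    exact: Ascal 2^-1 _ (Aadd _ _ Aphi (Aconj _ Aphi)).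
  by move=> x sx; rewrite ReJ_add mulrC Re_le.
apply: (selfadjoint_real_cluster_agree _ K_gt0).
  exact: Ascal ('i%C / 2) _ (Aadd _ _ (Aconj _ Aphi) (Ascal (-1) _ Aphi)).
by move=> x sx /=; rewrite ImJ_sub mulN1r Im_le //; split => //; ring.
Qed.

End Selfadjoint.

End AntisymmetricFilter.

Theorem lemma3p7 (R : realType) (Omega : topologicalType) (X : tvsType R[i])
  (v : Omega -> R) (f : Omega -> X) (A : set (Omega -> R[i])) (h : Omega -> X) :
  (forall x, 0 <= v x) ->
  (h = (fun x => (v x)%:C%C *: f x) \/ h = f) ->
  {within supp v, continuous h} ->
  (sub_C01 A \/
   (selfadjoint_subalgebra A /\
    (forall phi, A phi -> exists M : R, forall x, supp v x -> `|phi x| <= M%:C%C))) ->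
  separates_Lebesgue A h (supp v) ->
  beta_separates_Lebesgue A h v.
Proof.
move=> _ _ _ hA sep F [F_nonempty _ _ FI _] F_anti e e_dual a b ab.
set La := Lebesgue_le h (supp v) e a; set Lb := Lebesgue_ge h (supp v) e b.
have La_supp : La `<=` supp v by move=> x [].
have Lb_supp : Lb `<=` supp v by move=> x [].
have [phi Aphi disj] := sep e e_dual a b ab.
have [M phiM] : exists M : R, forall x, supp v x -> `|phi x| <= M%:C%C.
  case: hA => [A01 | [_ /(_ phi Aphi)//]].
  by exists 1 => x _; exact: sub_C01_norm_le1 A01 Aphi x.
have agree : cluster_agree F La Lb (reim \o phi).
  case: hA => [A01 | [Asa _]].
    exact (sub_C01_cluster_agree F_anti F_nonempty La_supp Lb_supp A01 Aphi).
  exact (selfadjoint_cluster_agree F_anti F_nonempty La_supp Lb_supp Asa Aphi phiM).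
apply: contrapT => noZ.
have meet_La Z : F Z -> Z `&` La !=set0.
  by move=> FZ; apply/set0P/eqP => ZLa0; apply: noZ; exists Z; last left.
have meet_Lb Z : F Z -> Z `&` Lb !=set0.
  by move=> FZ; apply/set0P/eqP => ZLb0; apply: noZ; exists Z; last right.
have [ta cta] := bounded_reim_cluster_value F_nonempty FI meet_La
  (fun x Lx => phiM x (La_supp x Lx)).
have [tb ctb] := bounded_reim_cluster_value F_nonempty FI meet_Lb
  (fun x Lx => phiM x (Lb_supp x Lx)).
have [Z0 FZ0] := F_nonempty.
have : (closC (phi @` La) `&` closC (phi @` Lb)) (pair_complex ta).
  split; first exact (cluster_value_closure F FZ0 (cluster_value_reim cta)).
  by rewrite (agree _ _ cta ctb); exact (cluster_value_closure F FZ0 (cluster_value_reim ctb)).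
by rewrite disj.
Qed.
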